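(* Let $X$ and $Y$ be Tychonoff spaces. If the free topological groups $F(X)$ and $F(Y)$ are topologically isomorphic, or if the free Abelian topological groups $A(X)$ and $A(Y)$ are topologically isomorphic, then $X$ is totally disconnected if and only if $Y$ is totally disconnected.
   Context: $F(X)$ is Markov's free topological group of $X$: a topological group containing $X$ as a generating subspace such that every continuous map from $X$ to a topological group extends uniquely to a continuous homomorphism from $F(X)$. $A(X)$ is Markov's free Abelian topological group, defined analogously with Abelian topological groups. A space is totally disconnected if any two distinct points are separated by a clopen set. *)

From HB Require Import structures.
From mathcomp Require Import all_boot all_order all_algebra.
From mathcomp Require Import all_classical all_reals topology normedtype.
Import numFieldNormedType.Exports.
Set Implicit Arguments. Unset Strict Implicit. Unset Printing Implicit Defensive.
Import Order.TTheory GRing.Theory Num.Theory.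
Local Open Scope classical_set_scope.

Definition tychonoff_space (R : realType) (T : topologicalType) : Prop :=
  hausdorff_space T /\
  forall (a : T) (B : set T), closed B -> ~ B a ->
    exists f : T -> R, continuous f /\ f a = 0%R /\ (forall b, B b -> f b = 1%R).

(** Totally disconnected, as in the paper: distinct points are separated by a clopen set. *)
Definition totally_disconnected_space (T : topologicalType) : Prop :=
  forall x y : T, x <> y -> exists U : set T, clopen U /\ U x /\ ~ U y.

Record topGroup := TopGroup {
  tg_carrier :> topologicalType;
  tg_mul : tg_carrier -> tg_carrier -> tg_carrier;
  tg_inv : tg_carrier -> tg_carrier;
  tg_one : tg_carrier;
  tg_mulA : forall x y z, tg_mul x (tg_mul y z) = tg_mul (tg_mul x y) z;
  tg_mul1g : forall x, tg_mul tg_one x = x;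
  tg_mulg1 : forall x, tg_mul x tg_one = x;
  tg_mulVg : forall x, tg_mul (tg_inv x) x = tg_one;
  tg_mulgV : forall x, tg_mul x (tg_inv x) = tg_one;
  tg_mul_cont : continuous (fun p : tg_carrier * tg_carrier => tg_mul p.1 p.2);
  tg_inv_cont : continuous tg_inv
}.
Arguments tg_mul {t}.
Arguments tg_inv {t}.
Arguments tg_one {t}.

Definition tg_abelian (G : topGroup) : Prop :=
  forall x y : G, tg_mul x y = tg_mul y x.

Definition group_hom (G H : topGroup) (h : G -> H) : Prop :=
  forall x y : G, h (tg_mul x y) = tg_mul (h x) (h y).

Definition top_embedding (X Y : topologicalType) (i : X -> Y) : Prop :=
  injective i /\ continuous i /\
  forall U : set X, open U -> exists V : set Y, open V /\ i @^-1` V = U.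

Definition generates (X : Type) (G : topGroup) (i : X -> G) : Prop :=
  forall S : set G,
    S tg_one -> (forall x y, S x -> S y -> S (tg_mul x y)) ->
    (forall x, S x -> S (tg_inv x)) -> (forall x, S (i x)) -> S = setT.

Definition is_free_topgroup (X : topologicalType) (G : topGroup) (i : X -> G) : Prop :=
  top_embedding i /\ generates i /\
  forall (H : topGroup) (f : X -> H), continuous f ->
    exists g : G -> H, [/\ group_hom g, continuous g, (forall x, g (i x) = f x) &
      forall g' : G -> H, group_hom g' -> continuous g' ->
        (forall x, g' (i x) = f x) -> g' = g].

Definition is_free_abelian_topgroup (X : topologicalType) (G : topGroup) (i : X -> G) : Prop :=
  tg_abelian G /\ top_embedding i /\ generates i /\
  forall (H : topGroup) (f : X -> H), tg_abelian H -> continuous f ->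
    exists g : G -> H, [/\ group_hom g, continuous g, (forall x, g (i x) = f x) &
      forall g' : G -> H, group_hom g' -> continuous g' ->
        (forall x, g' (i x) = f x) -> g' = g].

Definition top_group_iso (G H : topGroup) : Prop :=
  exists (h : G -> H) (k : H -> G),
    [/\ group_hom h, continuous h, continuous k, cancel h k & cancel k h].

From mathcomp Require Import all_boot all_order all_algebra.
From mathcomp Require Import all_classical all_reals topology normedtype.
From mathcomp Require Import zify ring.
Import numFieldNormedType.Exports.
Set Implicit Arguments. Unset Strict Implicit. Unset Printing Implicit Defensive.
Import Order.TTheory GRing.Theory Num.Theory.
Local Open Scope classical_set_scope.
Local Open Scope ring_scope.

(* If X is totally disconnected, so is A(X). A word representing a nontrivial
   element of A(X) contains some point x0 with nonzero total exponent n (words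
   in which every point has exponent sum 0 evaluate to 1 by commutativity).
   Separating x0 from the other letters by a clopen set U, the universal
   property extends the indicator of U to a continuous character
   A(X) -> R, integer-valued on the generators hence everywhere, and equal to
   n on the word; fibres of continuous integer-valued maps are clopen.
   Total disconnectedness pulls back along continuous injections, and Y
   injects into A(X) in both cases: through A(Y) ~= A(X), or through
   F(Y) ~= F(X) -> A(X), whose composite with the map A(X) -> A(Y) induced by
   the isomorphism is the embedding of Y. The Tychonoff hypotheses only
   guarantee that F(X) and A(X) exist. *)

Lemma continuousT_comp (S T U : topologicalType) (f : S -> T) (g : T -> U) :
  continuous f -> continuous g -> continuous (g \o f).
Proof. by move=> cf cg x; apply: continuous_comp; [exact: cf | exact: cg]. Qed.

Section TopGroupTheory.
Variable G : topGroup.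
Implicit Types a b : G.

Lemma tg_inv_uniq a b : tg_mul a b = tg_one -> b = tg_inv a.
Proof. by move=> ab; rewrite -(tg_mul1g b) -(tg_mulVg a) -tg_mulA ab tg_mulg1. Qed.

Lemma tg_invK a : tg_inv (tg_inv a) = a.
Proof. by symmetry; apply: tg_inv_uniq; rewrite tg_mulVg. Qed.

Lemma tg_inv1 : tg_inv (tg_one : G) = tg_one.
Proof. by symmetry; apply: tg_inv_uniq; rewrite tg_mul1g. Qed.

Lemma tg_invM a b : tg_inv (tg_mul a b) = tg_mul (tg_inv b) (tg_inv a).
Proof.
symmetry; apply: tg_inv_uniq.
by rewrite -tg_mulA (tg_mulA b) tg_mulgV tg_mul1g tg_mulgV.
Qed.

Lemma tg_divg_eq1 a b : tg_mul a (tg_inv b) = tg_one -> a = b.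
Proof. by move=> ab; rewrite -(tg_mulg1 a) -(tg_mulVg b) tg_mulA ab tg_mul1g. Qed.

Lemma tg_idem_eq1 a : tg_mul a a = a -> a = tg_one.
Proof. by move=> aa; rewrite -(tg_mulVg a) -{3}aa tg_mulA tg_mulVg tg_mul1g. Qed.

End TopGroupTheory.

Section GroupHom.
Variables (G H : topGroup) (h : G -> H).
Hypothesis hom_h : group_hom h.

Lemma group_hom1 : h tg_one = tg_one.
Proof. by apply: tg_idem_eq1; rewrite -hom_h tg_mul1g. Qed.

Lemma group_homV a : h (tg_inv a) = tg_inv (h a).
Proof. by apply: tg_inv_uniq; rewrite -hom_h tg_mulgV group_hom1. Qed.

Lemma group_hom_comp (K : topGroup) (g : H -> K) :
  group_hom g -> group_hom (g \o h).
Proof. by move=> hom_g a b /=; rewrite hom_h hom_g. Qed.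

Lemma group_hom_can (k : H -> G) : cancel h k -> cancel k h -> group_hom k.
Proof. by move=> hk kh a b; rewrite -{1}(kh a) -{1}(kh b) -hom_h hk. Qed.

End GroupHom.

Lemma top_group_iso_sym (G H : topGroup) : top_group_iso G H -> top_group_iso H G.
Proof.
move=> [h [k [hom_h ch ck hk kh]]]; exists k, h; split => //.
exact: (group_hom_can hom_h hk kh).
Qed.

Section RealLine.
Variable R : realType.

Definition R_topGroup : topGroup :=
  @TopGroup R +%R -%R 0 (@addrA R) (@add0r R) (@addr0 R) (@addNr R) (@addrN R)
    add_continuous opp_continuous.

Lemma R_topGroup_abelian : tg_abelian R_topGroup.
Proof. exact: addrC. Qed.

Definition indicator (T : topologicalType) (U : set T) (x : T) : R :=
  if `[< U x >] then 1 else 0.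

Lemma indicator_continuous (T : topologicalType) (U : set T) :
  clopen U -> continuous (indicator U).
Proof.
move=> [oU cU] x; apply: (near_cst_continuous (indicator U x)).
have oCU : open (~` U) by rewrite openC.
have [Ux|nUx] := pselect (U x).
- apply: filterS (open_nbhs_nbhs (conj oU Ux)) => y Uy.
  by rewrite /indicator !asboolT.
- apply: filterS (open_nbhs_nbhs (conj oCU nUx)) => y nUy.
  by rewrite /indicator !asboolF.
Qed.

Lemma int_valued_clopen_fibre (T : topologicalType) (f : T -> R) :
  continuous f -> (forall t, f t \is a Num.int) ->
  forall t, clopen (f @^-1` [set f t]).
Proof.
move=> cf f_int t; split.
  rewrite (_ : f @^-1` _ = f @^-1` ball (f t) 1).
    exact: (continuousP _).1 cf _ (ball_open _ _).
  apply/seteqP; split => y /=; first by move=> ->; exact: ballxx.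
  rewrite /ball /= => lt1; apply/eqP; rewrite eq_sym -subr_eq0.
  apply: contraTT lt1 => /(norm_intr_ge1 (rpredB (f_int t) (f_int y))).
  by rewrite leNgt.
apply: (continuous_closedP f).1 cf _ _; apply: accessible_closed_set1.
exact: hausdorff_accessible (@Rhausdorff R).
Qed.

End RealLine.

Lemma generates_ind (X : Type) (G : topGroup) (j : X -> G) (P : G -> Prop) :
  generates j -> P tg_one -> (forall a b, P a -> P b -> P (tg_mul a b)) ->
  (forall a, P a -> P (tg_inv a)) -> (forall x, P (j x)) -> forall a, P a.
Proof. by move=> gen_j P1 PM PV Pj a; rewrite (gen_j P P1 PM PV Pj). Qed.

Section Words.
Variables (X : topologicalType) (G : topGroup) (j : X -> G).

Definition wgen (i : X * bool) : G := if i.2 then j i.1 else tg_inv (j i.1).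

Definition weval (w : seq (X * bool)) : G :=
  foldr (fun i acc => tg_mul (wgen i) acc) tg_one w.

Definition balanced (w : seq (X * bool)) : Prop :=
  forall x, count_mem (x, true) w = count_mem (x, false) w.

Lemma weval_cat w1 w2 : weval (w1 ++ w2) = tg_mul (weval w1) (weval w2).
Proof.
by elim: w1 => [|i w IH] /=; [rewrite tg_mul1g | rewrite IH tg_mulA].
Qed.

Lemma wgen_mulV x b : tg_mul (wgen (x, b)) (wgen (x, ~~ b)) = tg_one.
Proof. by case: b; [exact: tg_mulgV | exact: tg_mulVg]. Qed.

Hypothesis abelianG : tg_abelian G.

Lemma weval_inv w : tg_inv (weval w) = weval [seq (i.1, ~~ i.2) | i <- w].
Proof.
elim: w => [|[x b] w IH] /=; first exact: tg_inv1.
rewrite tg_invM abelianG IH; congr tg_mul.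
by case: b; rewrite /wgen //= tg_invK.
Qed.

Lemma weval_rem w i : i \in w -> weval w = tg_mul (wgen i) (weval (rem i w)).
Proof.
elim: w => [|a w IH] //=; rewrite inE.
have [-> _ //|ne /= /IH ->] := eqVneq i a.
by rewrite !tg_mulA (abelianG (wgen a)).
Qed.

Lemma weval_surj : generates j -> forall z : G, exists w, z = weval w.
Proof.
move=> gen_j; apply: (generates_ind (P := fun z => exists w, z = weval w) gen_j).
- by exists [::].
- by move=> a b [w1 ->] [w2 ->]; exists (w1 ++ w2); rewrite weval_cat.
- by move=> a [w ->]; exists [seq (i.1, ~~ i.2) | i <- w]; rewrite weval_inv.
- by move=> x; exists [:: (x, true)]; rewrite /= tg_mulg1.
Qed.

Lemma weval_balanced w : balanced w -> weval w = tg_one.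
Proof.
elim: {w}(size w) {-2}w (leqnn (size w)) => [|n IHn] [|[x b] w] //= sz bal.
have inv_in_w : (x, ~~ b) \in w.
  rewrite -has_pred1 has_count.
  move: (bal x); rewrite /= !xpair_eqE eqxx /=.
  by clear; case: b => /=; lia.
rewrite (weval_rem inv_in_w) tg_mulA wgen_mulV tg_mul1g; apply: IHn.
  by rewrite size_rem // (leq_trans (leq_pred _)).
move=> y; have := bal y; rewrite /= !count_mem_rem !xpair_eqE.
by case: (x == y); case: b {bal inv_in_w} => /=; lia.
Qed.

End Words.

Lemma group_hom_wgen (X : topologicalType) (G H : topGroup) (j : X -> G)
    (g : G -> H) i :
  group_hom g -> g (wgen j i) = wgen (g \o j) i.
Proof. by move=> hom_g; case: i => x [] //=; rewrite /wgen /= group_homV. Qed.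

Lemma clopen_separate_seq (X : topologicalType) : totally_disconnected_space X ->
  forall (x0 : X) (s : seq X), x0 \notin s ->
  exists U, [/\ clopen U, U x0 & forall x, x \in s -> ~ U x].
Proof.
move=> tdX x0; elim=> [|a s IH]; first by exists setT; split => //; exact: clopenT.
rewrite inE negb_or => /andP[/eqP neq_a /IH[U [cU Ux0 sU]]].
have [V [cV [Vx0 nVa]]] := tdX _ _ neq_a.
exists (U `&` V); split => //; first exact: clopenI.
by move=> x; rewrite inE => /orP[/eqP -> [_ /nVa] | /sU nUx [/nUx]].
Qed.

Section FreeAbelianCharacters.
Variables (R : realType) (X : topologicalType) (G : topGroup) (j : X -> G).

Lemma weval_indicator (phi : G -> R_topGroup R) (U : set X) x0 w :
  group_hom phi -> (forall x, phi (j x) = indicator R U x) ->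
  U x0 -> (forall i, i \in w -> U i.1 -> i.1 = x0) ->
  phi (weval j w) = (count_mem (x0, true) w)%:R - (count_mem (x0, false) w)%:R.
Proof.
move=> hom_phi phi_j Ux0; elim: w => [|[x b] w IH] w_U /=.
  by rewrite group_hom1 // subrr.
rewrite hom_phi IH => [|i iw]; last by apply: w_U; rewrite inE iw orbT.
rewrite group_hom_wgen // /wgen /= phi_j /indicator !xpair_eqE.
have [Ux|nUx] := pselect (U x).
- have /= x_x0 := w_U (x, b) (mem_head _ _) Ux.
  rewrite x_x0 asboolT // eqxx.
  by case: b {w_U} => /=; rewrite add0n natrD; ring.
- have /negPf -> : x != x0 by apply: contraPneq nUx => ->.
  by rewrite asboolF //=; case: b {w_U} => /=; rewrite ?oppr0 add0r.
Qed.

Hypotheses (tdX : totally_disconnected_space X) (freeG : is_free_abelian_topgroup j).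

Lemma free_abelian_int_character z : z <> tg_one ->
  exists phi : G -> R_topGroup R,
    [/\ group_hom phi, continuous phi, forall a, phi a \is a Num.int & phi z != 0].
Proof.
have [abelianG [_ [gen_j univ]]] := freeG.
move=> z_neq1; have [w z_w] := weval_surj abelianG gen_j z.
have [x0 unbal] : exists x0, count_mem (x0, true) w <> count_mem (x0, false) w.
  by apply/existsNP => bal; apply: z_neq1; rewrite z_w weval_balanced.
have : x0 \notin [seq i.1 | i <- w & i.1 != x0].
  by apply/negP => /mapP[i]; rewrite mem_filter => /andP[/eqP neq_i _] /esym.
move=> /(clopen_separate_seq tdX)[U [cU Ux0 sU]].
have [phi [hom_phi cont_phi phi_j _]] :=
  univ _ _ (@R_topGroup_abelian R) (indicator_continuous (R:=R) cU).
exists phi; split => //.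
- apply: (generates_ind (P := fun a => phi a \is a Num.int) gen_j).
  + by rewrite group_hom1 //; exact: rpred0.
  + by move=> a b ? ?; rewrite hom_phi rpredD.
  + by move=> a ?; rewrite group_homV // rpredN.
  + by move=> x; rewrite phi_j /indicator; case: asboolP.
- rewrite z_w (weval_indicator hom_phi phi_j Ux0) ?subr_eq0 ?eqr_nat.
    by apply/eqP.
  move=> i iw Ui; apply/eqP; apply: contraPT Ui => neq_i; apply: sU.
  by apply/mapP; exists i; rewrite // mem_filter neq_i.
Qed.

Theorem free_abelian_totally_disconnected : totally_disconnected_space G.
Proof.
move=> z1 z2 neq_z.
have [|phi [hom_phi cont_phi int_phi nz]] :=
  free_abelian_int_character (z := tg_mul z1 (tg_inv z2)).
  by move/tg_divg_eq1.
exists (phi @^-1` [set phi z1]); split; first exact: int_valued_clopen_fibre.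
split => //= phi_eq; move: nz.
by rewrite hom_phi group_homV //= phi_eq subrr eqxx.
Qed.

End FreeAbelianCharacters.

Lemma totally_disconnected_inj (S T : topologicalType) (g : S -> T) :
  continuous g -> injective g ->
  totally_disconnected_space T -> totally_disconnected_space S.
Proof.
move=> cont_g inj_g tdT s1 s2 neq_s.
have [U [cU [Ugs1 nUgs2]]] := tdT _ _ (fun e => neq_s (inj_g _ _ e)).
by exists (g @^-1` U); split => //; exact: preimage_clopen.
Qed.

Lemma free_topgroup_hom_eq (X : topologicalType) (F H : topGroup) (i : X -> F)
    (g1 g2 : F -> H) :
  is_free_topgroup i -> group_hom g1 -> continuous g1 ->
  group_hom g2 -> continuous g2 -> (forall x, g1 (i x) = g2 (i x)) -> g1 = g2.
Proof.
move=> [[_ [cont_i _]] [_ univ]] hom_g1 cont_g1 hom_g2 cont_g2 g1_g2.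
have [g [_ _ _ uniq_g]] := univ H (g2 \o i) (continuousT_comp cont_i cont_g2).
by rewrite (uniq_g g1) // (uniq_g g2).
Qed.

Lemma free_abelian_iso_totally_disconnected (R : realType) (X Y : topologicalType)
    (AX AY : topGroup) (jX : X -> AX) (jY : Y -> AY) :
  is_free_abelian_topgroup jX -> is_free_abelian_topgroup jY ->
  top_group_iso AX AY -> totally_disconnected_space X -> totally_disconnected_space Y.
Proof.
move=> freeAX [_ [[inj_jY [cont_jY _]] _]] [h [k [_ _ cont_k _ kh]]] tdX.
apply: (totally_disconnected_inj (g := k \o jY)).
- exact: continuousT_comp.
- exact: inj_comp (can_inj kh) inj_jY.
- exact: (free_abelian_totally_disconnected R tdX freeAX).
Qed.

Lemma free_iso_totally_disconnected (R : realType) (X Y : topologicalType)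
    (FX FY AX AY : topGroup) (iX : X -> FX) (iY : Y -> FY)
    (jX : X -> AX) (jY : Y -> AY) :
  is_free_topgroup iX -> is_free_topgroup iY ->
  is_free_abelian_topgroup jX -> is_free_abelian_topgroup jY ->
  top_group_iso FX FY -> totally_disconnected_space X -> totally_disconnected_space Y.
Proof.
move=> freeFX [[_ [cont_iY _]] [_ univFY]] freeAX.
move=> [abelianAY [[inj_jY [cont_jY _]] _]] [h [k [hom_h cont_h cont_k _ kh]]] tdX.
have [[_ [cont_iX _]] [_ univFX]] := freeFX.
have [_ [[_ [cont_jX _]] [_ univAX]]] := freeAX.
have [abX [hom_abX cont_abX abX_iX _]] := univFX AX jX cont_jX.
have [abY [hom_abY cont_abY abY_iY _]] := univFY AY jY cont_jY.
have cont_hX : continuous (abY \o h \o iX).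
  exact: continuousT_comp cont_iX (continuousT_comp cont_h cont_abY).
have [lam [hom_lam cont_lam lam_jX _]] := univAX AY _ abelianAY cont_hX.
have lam_abX : lam \o abX = abY \o h.
  apply: (free_topgroup_hom_eq freeFX).
  - exact: group_hom_comp.
  - exact: continuousT_comp.
  - exact: group_hom_comp.
  - exact: continuousT_comp.
  - by move=> x /=; rewrite abX_iX lam_jX.
have lam_g y : lam (abX (k (iY y))) = jY y.
  by rewrite -[lam _]/((lam \o abX) _) lam_abX /= kh abY_iY.
apply: (totally_disconnected_inj (g := abX \o k \o iY)).
- exact: continuousT_comp cont_iY (continuousT_comp cont_k cont_abX).
- by move=> y1 y2 /(congr1 lam); rewrite /= !lam_g => /inj_jY.
- exact: (free_abelian_totally_disconnected R tdX freeAX).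
Qed.

Theorem corollary10p10 (R : realType) (X Y : topologicalType)
  (FX FY AX AY : topGroup) (iX : X -> FX) (iY : Y -> FY) (jX : X -> AX) (jY : Y -> AY) :
  tychonoff_space R X -> tychonoff_space R Y ->
  is_free_topgroup iX -> is_free_topgroup iY ->
  is_free_abelian_topgroup jX -> is_free_abelian_topgroup jY ->
  (top_group_iso FX FY \/ top_group_iso AX AY) ->
  (totally_disconnected_space X <-> totally_disconnected_space Y).
Proof.
move=> _ _ freeFX freeFY freeAX freeAY [iso|iso].
all: have iso' := top_group_iso_sym iso; split.
- exact: (free_iso_totally_disconnected R freeFX freeFY freeAX freeAY iso).
- exact: (free_iso_totally_disconnected R freeFY freeFX freeAY freeAX iso').
- exact: (free_abelian_iso_totally_disconnected R freeAX freeAY iso).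
- exact: (free_abelian_iso_totally_disconnected R freeAY freeAX iso').
Qed.
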